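(* For every base $b\ge 2$ there exist infinitely many $b$-wARH numbers that are not $b$-MRH numbers.
   Context: Fix a base $b\ge 2$. $s_b(N)$ is the sum of the base-$b$ digits of $N$. For a positive integer $X$, its reversal $X^R$ is the integer whose base-$b$ representation is that of $X$ written in reverse order (leading zeros of the result are dropped). A positive integer $N$ is a $b$-wARH number if there exists an integer $A\ge 0$ such that $N=(A+s_b(N))+(A+s_b(N))^R$. A positive integer $N$ is a $b$-MRH number if there exists a positive integer $M$ (a multiplicative multiplier) such that $N=(M s_b(N))\cdot (M s_b(N))^R$. *)

From mathcomp Require Import all_boot.
Set Implicit Arguments. Unset Strict Implicit. Unset Printing Implicit Defensive.

(* Base-b digits of n, least significant first; no leading (most significant)
   zero digits; digits of 0 is the empty list. Fuel = n suffices for b >= 2. *)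
Fixpoint digits_aux (b fuel n : nat) : seq nat :=
  match fuel with
  | 0 => [::]
  | fuel'.+1 => if n == 0 then [::] else (n %% b) :: digits_aux b fuel' (n %/ b)
  end.

Definition digits (b n : nat) : seq nat := digits_aux b n n.

Definition from_digits (b : nat) (ds : seq nat) : nat :=
  foldr (fun d acc => d + b * acc) 0 ds.

Definition digit_sum (b n : nat) : nat := sumn (digits b n).

(* X^R: digits written in reverse order (leading zeros of result dropped,
   which is automatic for the value) *)
Definition reversal (b n : nat) : nat := from_digits b (rev (digits b n)).

Definition wARH (b N : nat) : Prop :=
  0 < N /\ exists A : nat, N = (A + digit_sum b N) + reversal b (A + digit_sum b N).

Definition MRH (b N : nat) : Prop :=
  0 < N /\ exists M : nat, 0 < M /\
    N = (M * digit_sum b N) * reversal b (M * digit_sum b N).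

From mathcomp Require Import all_boot.
From mathcomp Require Import zify.

Set Implicit Arguments.
Unset Strict Implicit.
Unset Printing Implicit Defensive.

(* Let R = 11...1 (b ones) be the base-b repunit and put
   X = R * b^(b+m), whose digits (least significant first) are b+m zeros
   followed by b ones, so that X^R = R.  The witness is N = X + X^R, with
   digits 1^b 0^m 1^b; hence s_b(N) = 2b <= X and N is b-wARH with
   A = X - 2b.  On the other hand N = 1 (mod b), whereas any b-MRH number
   N = (M s)(M s)^R with b | s = s_b(N) is divisible by b. *)

Lemma from_digits_cat b s t :
  from_digits b (s ++ t) = from_digits b s + b ^ size s * from_digits b t.
Proof.
elim: s => [|d s IH] /=; first by rewrite mul1n.
by rewrite IH mulnDr mulnA -expnS addnA.
Qed.

Lemma from_digits_nseq0 b k : from_digits b (nseq k 0) = 0.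
Proof. by elim: k => //= k ->; rewrite muln0. Qed.

Definition canonical_digits (b : nat) (ds : seq nat) : bool :=
  all (fun d => d < b) ds && (last 1 ds != 0).

Section CanonicalDigits.

Variable b : nat.
Hypothesis hb : 1 < b.

Lemma from_digits_gt0 d ds :
  last d ds != 0 -> 0 < from_digits b (d :: ds).
Proof.
elim: ds d => [|e ds IH] d /= hl; first by move: hl; rewrite lt0n; lia.
have := IH e hl; rewrite /=; nia.
Qed.

Lemma digits_aux_from_digits ds fuel :
  canonical_digits b ds -> from_digits b ds <= fuel ->
  digits_aux b fuel (from_digits b ds) = ds.
Proof.
elim: ds fuel => [|d ds IH] [|fuel] //=; rewrite /canonical_digits /=.
- move=> /andP [_ hl] hle; have /= := from_digits_gt0 hl; lia.
- move=> /andP [/andP [hd hall] hl] hle.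
  have -> : (d + b * from_digits b ds == 0) = false.
    by apply/negbTE; rewrite -lt0n (from_digits_gt0 hl).
  have hmod : (d + b * from_digits b ds) %% b = d.
    by rewrite addnC mulnC modnMDl modn_small.
  have hdiv : (d + b * from_digits b ds) %/ b = from_digits b ds.
    by rewrite addnC mulnC divnMDl ?(ltnW hb) // divn_small // addn0.
  rewrite hmod hdiv IH //; last by nia.
  by rewrite /canonical_digits hall; case: ds hl {IH hall hle hmod hdiv}.
Qed.

Lemma digits_from_digits ds :
  canonical_digits b ds -> digits b (from_digits b ds) = ds.
Proof. by move=> hds; rewrite /digits digits_aux_from_digits. Qed.

Lemma digit_sum_from_digits ds :
  canonical_digits b ds -> digit_sum b (from_digits b ds) = sumn ds.
Proof. by move=> hds; rewrite /digit_sum digits_from_digits. Qed.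

Lemma reversal_from_digits ds :
  canonical_digits b ds -> reversal b (from_digits b ds) = from_digits b (rev ds).
Proof. by move=> hds; rewrite /reversal digits_from_digits. Qed.

End CanonicalDigits.

Lemma wARH_add_reversal b X :
  0 < X + reversal b X -> digit_sum b (X + reversal b X) <= X ->
  wARH b (X + reversal b X).
Proof.
move=> hpos hle; split => //.
by exists (X - digit_sum b (X + reversal b X)); rewrite subnK.
Qed.

Lemma MRH_dvdn b N : MRH b N -> b %| digit_sum b N -> b %| N.
Proof.
move=> [_ [M [_ hN]]] hs; rewrite hN.
by apply: dvdn_mulr; apply: dvdn_mull.
Qed.

Definition repunit (b k : nat) : nat := from_digits b (nseq k 1).

Lemma repunit_mod b k : 1 < b -> 0 < k -> repunit b k %% b = 1.
Proof.
by move=> hb; case: k => // k _; rewrite /repunit /= addnC mulnC modnMDl modn_small.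
Qed.

Lemma repunit_gt0 b k : 0 < k -> 0 < repunit b k.
Proof. by case: k => // k _; rewrite /repunit /=; lia. Qed.

Lemma canonical_ones b s k :
  1 < b -> 0 < k -> all (fun d => d < b) s -> canonical_digits b (s ++ nseq k 1).
Proof.
move=> hb; case: k => // k _ hs.
rewrite /canonical_digits all_cat hs all_nseq hb orbT last_cat /=.
by elim: k.
Qed.

Section Witness.

Variables b m : nat.
Hypothesis hb : 1 < b.

Let X_digits : seq nat := nseq (b + m) 0 ++ nseq b 1.
Let N_digits : seq nat := nseq b 1 ++ nseq m 0 ++ nseq b 1.

Let hb0 : 0 < b. Proof. by lia. Qed.

Lemma X_canonical : canonical_digits b X_digits.
Proof. by apply: canonical_ones; rewrite // all_nseq hb0 orbT. Qed.

Lemma N_canonical : canonical_digits b N_digits.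
Proof.
by rewrite /N_digits catA; apply: canonical_ones; rewrite // all_cat !all_nseq hb hb0 !orbT.
Qed.

Lemma X_value : from_digits b X_digits = b ^ (b + m) * repunit b b.
Proof. by rewrite from_digits_cat from_digits_nseq0 size_nseq. Qed.

Lemma X_reversal : reversal b (from_digits b X_digits) = repunit b b.
Proof.
rewrite reversal_from_digits ?X_canonical // rev_cat !rev_nseq.
by rewrite from_digits_cat from_digits_nseq0 muln0 addn0.
Qed.

Lemma N_value :
  from_digits b N_digits = from_digits b X_digits + reversal b (from_digits b X_digits).
Proof.
rewrite X_reversal X_value !from_digits_cat from_digits_nseq0 !size_nseq expnD.
by rewrite /repunit; lia.
Qed.

Lemma N_digit_sum : digit_sum b (from_digits b N_digits) = b + b.
Proof.
by rewrite digit_sum_from_digits ?N_canonical // !sumn_cat !sumn_nseq; lia.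
Qed.

Lemma N_mod : from_digits b N_digits %% b = 1.
Proof.
rewrite N_value X_reversal X_value -modnDm.
have -> : b ^ (b + m) = b * b ^ (b + m).-1 by rewrite -expnS prednK ?expn_gt0 ?hb0 //; lia.
by rewrite -mulnA modnMr add0n !modn_mod repunit_mod.
Qed.

(* X exceeds the digit sum 2b of N, since b + b <= b^2 <= X. *)
Lemma X_ge_digit_sum : b + b <= from_digits b X_digits.
Proof.
have hR := @repunit_gt0 b b hb0.
have h2 : b ^ 2 <= b ^ (b + m) by rewrite leq_pexp2l //; lia.
by rewrite X_value; rewrite expnS expn1 in h2; nia.
Qed.

(* X exceeds m, since m < b^m <= X. *)
Lemma X_gt : m < from_digits b X_digits.
Proof.
have hR := @repunit_gt0 b b hb0.
have hm : m < b ^ m by apply: ltn_expl.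
have hmb : b ^ m <= b ^ (b + m) by rewrite leq_pexp2l //; lia.
by rewrite X_value; nia.
Qed.

End Witness.

Theorem proposition10 (b : nat) (hb : 2 <= b) :
  forall m : nat, exists N : nat, m < N /\ wARH b N /\ ~ MRH b N.
Proof.
move=> m.
pose X := from_digits b (nseq (b + m) 0 ++ nseq b 1).
pose N := from_digits b (nseq b 1 ++ nseq m 0 ++ nseq b 1).
have hN : N = X + reversal b X by exact: N_value.
have hsN : digit_sum b N = b + b by exact: N_digit_sum.
have hmX : m < X by exact: X_gt.
have h2bX : b + b <= X by exact: X_ge_digit_sum.
have hb_sN : b %| digit_sum b N by rewrite hsN addnn -mul2n dvdn_mull.
have hb_N : ~~ (b %| N) by rewrite /dvdn N_mod.
exists N; split; last split.
- by rewrite hN; lia.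
- by rewrite hN; apply: wARH_add_reversal; rewrite -hN ?hsN //; lia.
- by move=> /MRH_dvdn /(_ hb_sN); apply/negP.
Qed.
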